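(* Let $\lambda>0$, $\gamma>0$, and let $\beta_1=\beta_1(\gamma)$ be the unique positive solution of $\frac{\sqrt\pi}{2}\gamma x(1+x)^{1/2}(3+x)=1$. Let $h:[0,\lambda]\to\mathbb{R}$ be a bounded analytic function with $0\le h\le 1$, let $\eta\in[0,\lambda]$ and $b_1,b_2\in[0,\beta_1)$. Then $$\int_0^\eta\left|\frac{\exp\left(-2\int_0^x\frac{\xi}{1+b_1h(\xi)}d\xi\right)}{1+b_1h(x)}-\frac{\exp\left(-2\int_0^x\frac{\xi}{1+b_2h(\xi)}d\xi\right)}{1+b_2h(x)}\right|dx\le\frac{1}{2\gamma\beta_1}|b_1-b_2|.$$ *)

From Stdlib Require Import Reals.
From Coquelicot Require Import Coquelicot.
Open Scope R_scope.

Definition analytic_on (h : R -> R) (a b : R) : Prop :=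
  forall x0, a <= x0 <= b ->
    exists (c : nat -> R) (r : R), 0 < r /\
      forall x, a <= x <= b -> Rabs (x - x0) < r ->
        is_pseries c (x - x0) (h x).

Definition Fb (h : R -> R) (b x : R) : R :=
  exp (-2 * RInt (fun xi => xi / (1 + b * h xi)) 0 x) / (1 + b * h x).

(* Write F_b = exp (-2 G_b) / (1 + b h) with G_b x = int_0^x xi / (1 + b h xi) dxi.
   For b1 <= b2 <= beta and 0 <= h <= 1 the phases satisfy
   x^2 / (2 (1 + beta)) <= G_b2 <= G_b1 <= (1 + b2 - b1) G_b2, which yields the pointwise
   bound |F_b1 - F_b2| <= (b2 - b1) e^-s max(1, s) with s = x^2 / (1 + beta).  Bounding this
   by 1 on [0, sqrt (1 + beta)] and by a function with an explicit primitive beyond gives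
   int_0^eta |F_b1 - F_b2| <= (b2 - b1) sqrt (1 + beta) (1 + 3 / (4 e)), and the equation
   defining beta1 shows that this constant is at most 1 / (2 gam beta1).
   Analyticity of h is only used for continuity (clamping then extends h continuously to R). *)

From Stdlib Require Import Reals Lra.
From Coquelicot Require Import Coquelicot.
Open Scope R_scope.

Lemma Rabs_sub_le_Rmax (u v : R) : 0 <= u -> 0 <= v -> Rabs (u - v) <= Rmax u v.
Proof.
  intros. unfold Rmax. destruct Rle_dec; unfold Rabs; destruct Rcase_abs; lra.
Qed.

Lemma exp_le_exp_of_le (x y : R) : x <= y -> exp x <= exp y.
Proof. intros [Hlt | ->]; [left; apply exp_increasing | right]; auto. Qed.

Lemma exp_opp_sub_le (u v : R) : u <= v -> exp (- u) - exp (- v) <= (v - u) * exp (- u).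
Proof.
  intros Huv.
  assert (Hsplit : exp (- v) = exp (- u) * exp (u - v)).
  { rewrite <- exp_plus. f_equal. ring. }
  pose proof (exp_ineq1_le (u - v)). pose proof (exp_pos (- u)). nra.
Qed.

Lemma inv_1_add_sub_le (b1 b2 t : R) : 0 <= b1 <= b2 -> 0 <= t <= 1 ->
  0 <= / (1 + b1 * t) - / (1 + b2 * t) <= b2 - b1.
Proof.
  intros Hb Ht.
  assert (H1 : 1 <= 1 + b1 * t) by nra. assert (H2 : 1 <= 1 + b2 * t) by nra.
  set (d := (1 + b1 * t) * (1 + b2 * t)).
  assert (Hd : 1 <= d) by (unfold d; nra).
  assert (Hinv : 0 < / d <= 1).
  { split; [apply Rinv_0_lt_compat; lra |].
    rewrite <- Rinv_1. apply Rinv_le_contravar; lra. }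
  replace (/ (1 + b1 * t) - / (1 + b2 * t)) with ((b2 - b1) * t * / d)
    by (unfold d; field; nra).
  assert (0 <= (b2 - b1) * t <= b2 - b1) by nra.
  split; nra.
Qed.

Definition decay (s : R) : R := exp (- s) * Rmax 1 s.

Lemma decay_antitone (s t : R) : 0 <= s <= t -> decay t <= decay s.
Proof.
  intros [Hs Hst]. unfold decay.
  assert (Hexp : exp (- s) = exp (- t) * exp (t - s)).
  { rewrite <- exp_plus. f_equal. ring. }
  pose proof (exp_ineq1_le (t - s)). pose proof (exp_pos (- t)).
  destruct (Rle_dec t 1).
  - rewrite !Rmax_left by lra. nra.
  - rewrite (Rmax_right 1 t) by lra.
    destruct (Rle_dec 1 s).
    + rewrite (Rmax_right 1 s) by lra.
      assert (t <= s * exp (t - s)) by nra. nra.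
    + rewrite (Rmax_left 1 s) by lra.
      assert (t <= exp (t - s)) by nra. nra.
Qed.

Lemma exp_div_sub_le (b1 b2 t g1 g2 : R) :
  0 <= b1 <= b2 -> 0 <= t <= 1 -> 0 <= g2 <= g1 -> g1 <= (1 + b2 - b1) * g2 ->
  Rabs (exp (-2 * g1) / (1 + b1 * t) - exp (-2 * g2) / (1 + b2 * t))
    <= (b2 - b1) * decay (2 * g2).
Proof.
  intros Hb Ht Hg Hg1. unfold decay.
  replace (-2 * g1) with (- (2 * g1)) by ring.
  replace (-2 * g2) with (- (2 * g2)) by ring.
  set (E1 := exp (- (2 * g1))). set (E2 := exp (- (2 * g2))).
  set (q1 := / (1 + b1 * t)). set (q2 := / (1 + b2 * t)).
  assert (HE1 : 0 < E1) by apply exp_pos.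
  assert (HE : 0 <= E2 - E1 <= (2 * g1 - 2 * g2) * E2).
  { split.
    - enough (E1 <= E2) by lra. apply exp_le_exp_of_le. lra.
    - apply exp_opp_sub_le. lra. }
  assert (Hq : 0 <= q1 - q2 <= b2 - b1) by (apply inv_1_add_sub_le; assumption).
  assert (Hq2 : 0 < q2 <= 1).
  { split; [apply Rinv_0_lt_compat; nra |].
    rewrite <- Rinv_1. apply Rinv_le_contravar; nra. }
  replace (E1 / (1 + b1 * t) - E2 / (1 + b2 * t)) with (E1 * (q1 - q2) - (E2 - E1) * q2)
    by (unfold q1, q2, Rdiv; ring).
  pose proof (Rmax_l 1 (2 * g2)). pose proof (Rmax_r 1 (2 * g2)).
  set (M := Rmax 1 (2 * g2)) in *.
  assert (HE2 : 0 < E2) by apply exp_pos.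
  assert (HM : (b2 - b1) * E2 <= (b2 - b1) * (E2 * M)) by (apply Rmult_le_compat_l; nra).
  assert (HM2 : (b2 - b1) * (2 * g2) * E2 <= (b2 - b1) * (E2 * M))
    by (replace ((b2 - b1) * (2 * g2) * E2) with ((b2 - b1) * (E2 * (2 * g2))) by ring;
        apply Rmult_le_compat_l; nra).
  eapply Rle_trans; [apply Rabs_sub_le_Rmax; nra |].
  apply Rmax_lub.
  - assert (E1 * (q1 - q2) <= E1 * (b2 - b1)) by (apply Rmult_le_compat_l; lra).
    assert (E1 * (b2 - b1) <= E2 * (b2 - b1)) by (apply Rmult_le_compat_r; lra).
    nra.
  - assert ((E2 - E1) * q2 <= E2 - E1) by nra.
    assert ((2 * g1 - 2 * g2) * E2 <= (b2 - b1) * (2 * g2) * E2) by nra.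
    nra.
Qed.

Lemma decay_le_1 (s : R) : 0 <= s -> decay s <= 1.
Proof.
  intros Hs.
  assert (Hdecay0 : decay 0 = 1) by (unfold decay; rewrite Ropp_0, exp_0, Rmax_left; lra).
  rewrite <- Hdecay0. apply decay_antitone. lra.
Qed.

Definition decay_tail (k x : R) : R :=
  x / (2 * k) * (1 + x * x / (k * k)) * exp (- (x * x / (k * k))).

Definition decay_tail_primitive (k x : R) : R :=
  - (k / 4) * (x * x / (k * k) + 2) * exp (- (x * x / (k * k))).

Lemma decay_le_tail (k x : R) : 0 < k -> k <= x -> decay (x * x / (k * k)) <= decay_tail k x.
Proof.
  intros Hk Hx. unfold decay, decay_tail.
  set (u := x / k).
  assert (Hu : 1 <= u).
  { unfold u. apply (Rmult_le_reg_r k); [lra |].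
    unfold Rdiv. rewrite Rmult_assoc, Rinv_l; lra. }
  replace (x * x / (k * k)) with (u * u) by (unfold u; field; lra).
  replace (x / (2 * k)) with (u / 2) by (unfold u; field; lra).
  rewrite Rmax_right by nra.
  pose proof (exp_pos (- (u * u))).
  assert (0 <= u * ((u - 1) * (u - 1))) by (apply Rmult_le_pos; nra).
  assert (u * u <= u / 2 * (1 + u * u)) by nra.
  rewrite Rmult_comm. apply Rmult_le_compat_r; lra.
Qed.

Lemma is_RInt_decay_tail (k a b : R) : 0 < k ->
  is_RInt (decay_tail k) a b (decay_tail_primitive k b - decay_tail_primitive k a).
Proof.
  intros Hk.
  apply (@is_RInt_derive R_CompleteNormedModule (decay_tail_primitive k)).
  - intros x _. unfold decay_tail_primitive, decay_tail.
    auto_derive; [auto | unfold Rdiv; field; lra].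
  - intros x _. apply (@ex_derive_continuous R_AbsRing R_NormedModule).
    unfold decay_tail. auto_derive. auto.
Qed.

Lemma RInt_decay_tail_le (k eta : R) : 0 < k ->
  RInt (decay_tail k) k eta <= 3 / 4 * exp (-1) * k.
Proof.
  intros Hk. rewrite (is_RInt_unique _ _ _ _ (is_RInt_decay_tail k k eta Hk)).
  unfold decay_tail_primitive.
  replace (k * k / (k * k)) with 1 by (field; lra).
  assert (0 <= eta * eta / (k * k)).
  { apply Rmult_le_pos; [nra | left; apply Rinv_0_lt_compat; nra]. }
  pose proof (exp_pos (- (eta * eta / (k * k)))).
  assert (0 <= k / 4 * (eta * eta / (k * k) + 2) * exp (- (eta * eta / (k * k)))).
  { apply Rmult_le_pos; [apply Rmult_le_pos |]; lra. }
  replace (- (1)) with (-1) by ring. nra.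
Qed.

Lemma RInt_le_const (f : R -> R) (a b c : R) : a <= b -> ex_RInt f a b ->
  (forall x, a <= x <= b -> f x <= c) -> RInt f a b <= c * (b - a).
Proof.
  intros Hab Hf Hle.
  eapply Rle_trans.
  { apply (RInt_le f (fun _ => c)); [exact Hab | exact Hf | apply ex_RInt_const |].
    intros x Hx. apply Hle. lra. }
  rewrite RInt_const. unfold scal; simpl; unfold mult; simpl. lra.
Qed.

Lemma RInt_le_of_le_decay (f : R -> R) (c k eta : R) :
  0 <= c -> 0 < k -> 0 <= eta -> (forall u v, ex_RInt f u v) ->
  (forall x, 0 <= x -> f x <= c * decay (x * x / (k * k))) ->
  RInt f 0 eta <= c * (k * (1 + 3 / 4 * exp (-1))).
Proof.
  intros Hc Hk Heta Hf Hle.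
  assert (Hbound : k <= k * (1 + 3 / 4 * exp (-1))) by (pose proof (exp_pos (-1)); nra).
  assert (Hhead : forall x, 0 <= x -> f x <= c).
  { intros x Hx. eapply Rle_trans; [apply Hle; lra |].
    rewrite <- (Rmult_1_r c) at 2. apply Rmult_le_compat_l; [lra |].
    apply decay_le_1. apply Rmult_le_pos; [nra | left; apply Rinv_0_lt_compat; nra]. }
  destruct (Rle_dec eta k) as [Hek | Hek].
  - eapply Rle_trans; [apply RInt_le_const; [lra | apply Hf | intros x Hx; apply Hhead; lra] |].
    apply Rmult_le_compat_l; lra.
  - rewrite <- (RInt_Chasles f 0 k eta) by apply Hf.
    change (plus (RInt f 0 k) (RInt f k eta)) with (RInt f 0 k + RInt f k eta).
    assert (Hfirst : RInt f 0 k <= c * (k - 0))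
      by (apply RInt_le_const; [lra | apply Hf | intros x Hx; apply Hhead; lra]).
    assert (Htail : ex_RInt (decay_tail k) k eta)
      by (eexists; apply is_RInt_decay_tail; lra).
    assert (Hsecond : RInt f k eta <= c * RInt (decay_tail k) k eta).
    { assert (Hscal : RInt (fun x => c * decay_tail k x) k eta = c * RInt (decay_tail k) k eta)
        by exact (RInt_scal (decay_tail k) k eta c Htail).
      rewrite <- Hscal.
      apply RInt_le; [lra | apply Hf | exact (ex_RInt_scal (decay_tail k) k eta c Htail) |].
      intros x Hx. eapply Rle_trans; [apply Hle; lra |].
      apply Rmult_le_compat_l; [lra | apply decay_le_tail; lra]. }
    pose proof (RInt_decay_tail_le k eta Hk).
    assert (c * RInt (decay_tail k) k eta <= c * (3 / 4 * exp (-1) * k))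
      by (apply Rmult_le_compat_l; lra).
    replace (c * (k * (1 + 3 / 4 * exp (-1)))) with (c * (k - 0) + c * (3 / 4 * exp (-1) * k))
      by ring.
    lra.
Qed.

Lemma RInt_id_div (c x : R) : 0 < c -> RInt (fun xi => xi / c) 0 x = x * x / (2 * c).
Proof.
  intros Hc.
  assert (Hint : is_RInt (fun xi => xi / c) 0 x (x * x / (2 * c))).
  { replace (x * x / (2 * c)) with (x * x / (2 * c) - 0 * 0 / (2 * c)) by (field; lra).
    apply (@is_RInt_derive R_CompleteNormedModule (fun y => y * y / (2 * c))).
    - intros y _. auto_derive; [auto | field; lra].
    - intros y _. apply (@ex_derive_continuous R_AbsRing R_NormedModule). auto_derive. auto. }
  exact (is_RInt_unique _ _ _ _ Hint).
Qed.

Section ContinuousProfile.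

Variable h : R -> R.
Hypothesis h_cont : forall x, continuous h x.
Hypothesis h_range : forall x, 0 <= h x <= 1.

Definition Gb (b x : R) : R := RInt (fun xi => xi / (1 + b * h xi)) 0 x.

Lemma Fb_Gb (b x : R) : Fb h b x = exp (-2 * Gb b x) / (1 + b * h x).
Proof. reflexivity. Qed.

Lemma one_le_denom (b x : R) : 0 <= b -> 1 <= 1 + b * h x.
Proof. intros Hb. pose proof (h_range x). nra. Qed.

Lemma continuous_inv_denom (b x : R) : 0 <= b -> continuous (fun y => / (1 + b * h y)) x.
Proof.
  intros Hb. apply continuous_Rinv_comp.
  - apply (continuous_plus (fun _ => 1) (fun y => b * h y)); [apply continuous_const |].
    apply (continuous_mult (fun _ => b) h); [apply continuous_const | apply h_cont].
  - pose proof (one_le_denom b x Hb). lra.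
Qed.

Lemma continuous_weight (b x : R) : 0 <= b -> continuous (fun xi => xi / (1 + b * h xi)) x.
Proof.
  intros Hb. apply (continuous_mult (fun y => y) (fun y => / (1 + b * h y)));
    [apply continuous_id | apply continuous_inv_denom; exact Hb].
Qed.

Lemma ex_RInt_weight (b u v : R) : 0 <= b -> ex_RInt (fun xi => xi / (1 + b * h xi)) u v.
Proof.
  intros Hb. apply (@ex_RInt_continuous R_CompleteNormedModule). intros x _.
  apply continuous_weight. exact Hb.
Qed.

Lemma continuous_Gb (b x : R) : 0 <= b -> continuous (Gb b) x.
Proof.
  intros Hb. apply (@ex_derive_continuous R_AbsRing R_NormedModule).
  exists (x / (1 + b * h x)).
  apply (is_derive_RInt (fun xi => xi / (1 + b * h xi)) (Gb b) 0 x).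
  - apply filter_forall. intro y. apply (@RInt_correct R_CompleteNormedModule).
    apply ex_RInt_weight. exact Hb.
  - apply continuous_weight. exact Hb.
Qed.

Lemma continuous_Fb (b x : R) : 0 <= b -> continuous (Fb h b) x.
Proof.
  intros Hb.
  apply (continuous_mult (fun y => exp (-2 * Gb b y)) (fun y => / (1 + b * h y)));
    [| apply continuous_inv_denom; exact Hb].
  apply continuous_exp_comp.
  apply (continuous_mult (fun _ => -2) (Gb b)); [apply continuous_const |].
  apply continuous_Gb. exact Hb.
Qed.

Lemma ex_RInt_Rabs_Fb_sub (b1 b2 u v : R) : 0 <= b1 -> 0 <= b2 ->
  ex_RInt (fun x => Rabs (Fb h b1 x - Fb h b2 x)) u v.
Proof.
  intros Hb1 Hb2. apply (@ex_RInt_continuous R_CompleteNormedModule). intros x _.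
  apply continuous_Rabs_comp.
  apply (continuous_minus (Fb h b1) (Fb h b2)); apply continuous_Fb; assumption.
Qed.

Lemma Gb_ge (b beta x : R) : 0 <= b <= beta -> 0 <= x -> x * x / (2 * (1 + beta)) <= Gb b x.
Proof.
  intros Hb Hx. rewrite <- RInt_id_div by lra. unfold Gb.
  apply RInt_le; [exact Hx | | apply ex_RInt_weight; lra |].
  - apply (@ex_RInt_continuous R_CompleteNormedModule). intros y _.
    apply (continuous_mult (fun y => y) (fun _ => / (1 + beta)));
      [apply continuous_id | apply continuous_const].
  - intros xi Hxi. pose proof (h_range xi). pose proof (one_le_denom b xi (proj1 Hb)).
    apply Rmult_le_compat_l; [lra |]. apply Rinv_le_contravar; nra.
Qed.

Lemma Gb_antitone (b1 b2 x : R) : 0 <= b1 <= b2 -> 0 <= x -> Gb b2 x <= Gb b1 x.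
Proof.
  intros Hb Hx. unfold Gb.
  apply RInt_le; [exact Hx | apply ex_RInt_weight; lra | apply ex_RInt_weight; lra |].
  intros xi Hxi. pose proof (h_range xi). pose proof (one_le_denom b1 xi (proj1 Hb)).
  apply Rmult_le_compat_l; [lra |]. apply Rinv_le_contravar; nra.
Qed.

Lemma Gb_le_scale (b1 b2 x : R) : 0 <= b1 <= b2 -> 0 <= x ->
  Gb b1 x <= (1 + b2 - b1) * Gb b2 x.
Proof.
  intros Hb Hx. unfold Gb.
  assert (Hex2 := ex_RInt_weight b2 0 x ltac:(lra)).
  assert (Hscal : RInt (fun xi => (1 + b2 - b1) * (xi / (1 + b2 * h xi))) 0 x
                  = (1 + b2 - b1) * RInt (fun xi => xi / (1 + b2 * h xi)) 0 x)
    by exact (RInt_scal _ 0 x (1 + b2 - b1) Hex2).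
  rewrite <- Hscal.
  apply RInt_le; [exact Hx | apply ex_RInt_weight; lra
                 | exact (ex_RInt_scal _ 0 x (1 + b2 - b1) Hex2) |].
  intros xi Hxi. pose proof (h_range xi).
  pose proof (one_le_denom b1 xi (proj1 Hb)). pose proof (one_le_denom b2 xi ltac:(lra)).
  assert (Hden : 1 + b2 * h xi <= (1 + b2 - b1) * (1 + b1 * h xi)) by nra.
  unfold Rdiv. rewrite <- Rmult_assoc, (Rmult_comm (1 + b2 - b1)), Rmult_assoc.
  apply Rmult_le_compat_l; [lra |].
  apply (Rmult_le_reg_r ((1 + b1 * h xi) * (1 + b2 * h xi))); [nra |].
  replace (/ (1 + b1 * h xi) * ((1 + b1 * h xi) * (1 + b2 * h xi))) with (1 + b2 * h xi)
    by (field; lra).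
  replace ((1 + b2 - b1) * / (1 + b2 * h xi) * ((1 + b1 * h xi) * (1 + b2 * h xi)))
    with ((1 + b2 - b1) * (1 + b1 * h xi)) by (field; lra).
  exact Hden.
Qed.

Lemma Rabs_Fb_sub_le (b1 b2 beta x : R) : 0 <= b1 <= b2 -> b2 <= beta -> 0 <= x ->
  Rabs (Fb h b1 x - Fb h b2 x) <= (b2 - b1) * decay (x * x / (1 + beta)).
Proof.
  intros Hb Hbeta Hx. rewrite !Fb_Gb.
  pose proof (Gb_ge b2 beta x ltac:(lra) Hx) as Hge.
  eapply Rle_trans.
  { apply exp_div_sub_le; [exact Hb | apply h_range | | apply Gb_le_scale; assumption].
    split; [| apply Gb_antitone; assumption].
    eapply Rle_trans; [| exact Hge].
    apply Rmult_le_pos; [nra | left; apply Rinv_0_lt_compat; lra]. }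
  apply Rmult_le_compat_l; [lra |]. apply decay_antitone. split.
  - apply Rmult_le_pos; [nra | left; apply Rinv_0_lt_compat; lra].
  - replace (x * x / (1 + beta)) with (2 * (x * x / (2 * (1 + beta)))) by (field; lra). lra.
Qed.

Lemma RInt_Rabs_Fb_sub_le (b1 b2 beta eta : R) : 0 <= b1 <= beta -> 0 <= b2 <= beta ->
  0 <= eta ->
  RInt (fun x => Rabs (Fb h b1 x - Fb h b2 x)) 0 eta
    <= Rabs (b1 - b2) * (sqrt (1 + beta) * (1 + 3 / 4 * exp (-1))).
Proof.
  intros Hb1 Hb2 Heta.
  assert (Hk : 0 < sqrt (1 + beta)) by (apply sqrt_lt_R0; lra).
  assert (Hkk : sqrt (1 + beta) * sqrt (1 + beta) = 1 + beta) by (apply sqrt_sqrt; lra).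
  apply RInt_le_of_le_decay; [apply Rabs_pos | exact Hk | exact Heta | |].
  { intros u v. apply ex_RInt_Rabs_Fb_sub; lra. }
  intros x Hx. rewrite Hkk.
  destruct (Rle_dec b1 b2).
  - rewrite (Rabs_minus_sym b1 b2), (Rabs_pos_eq (b2 - b1)) by lra.
    apply Rabs_Fb_sub_le; lra.
  - rewrite Rabs_minus_sym, (Rabs_pos_eq (b1 - b2)) by lra.
    apply Rabs_Fb_sub_le; lra.
Qed.

End ContinuousProfile.

Lemma CV_radius_pos_of_is_pseries (c : nat -> R) (y l : R) :
  y <> 0 -> is_pseries c y l -> Rbar_lt 0 (CV_radius c).
Proof.
  intros Hy Hser.
  apply Rbar_lt_le_trans with (Rabs y); [simpl; apply Rabs_pos_lt; exact Hy |].
  apply Rbar_not_lt_le. intros Hout. apply (CV_disk_outside c y Hout).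
  assert (Hterms := ex_series_lim_0 _ (ex_intro _ l Hser)).
  eapply is_lim_seq_ext; [| exact Hterms]. intros n. simpl.
  rewrite pow_n_pow. unfold scal; simpl; unfold mult; simpl. ring.
Qed.

Lemma exists_near_distinct (a b x0 r : R) : a < b -> 0 < r -> a <= x0 <= b ->
  exists y, a <= y <= b /\ Rabs (y - x0) < r /\ y <> x0.
Proof.
  intros Hab Hr Hx0.
  set (d := Rmin r (b - a) / 2).
  assert (Hd : 0 < d /\ d < r /\ 2 * d <= b - a).
  { pose proof (Rmin_l r (b - a)). pose proof (Rmin_r r (b - a)).
    assert (0 < Rmin r (b - a)) by (apply Rmin_glb_lt; lra). unfold d. lra. }
  destruct (Rle_dec (x0 + d) b).
  - exists (x0 + d). rewrite Rabs_pos_eq; lra.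
  - exists (x0 - d). rewrite Rabs_left; lra.
Qed.

Lemma analytic_on_continuous_within (h : R -> R) (a b x0 : R) :
  a < b -> analytic_on h a b -> a <= x0 <= b ->
  filterlim h (within (fun x => a <= x <= b) (locally x0)) (locally (h x0)).
Proof.
  intros Hab Hana Hx0.
  destruct (Hana x0 Hx0) as [c [r [Hr Hser]]].
  assert (Hrad : Rbar_lt 0 (CV_radius c)).
  { destruct (exists_near_distinct a b x0 r Hab Hr Hx0) as [y [Hy [Hyr Hyx]]].
    apply (CV_radius_pos_of_is_pseries c (y - x0) (h y)); [lra | apply Hser; assumption]. }
  assert (Hh0 : h x0 = PSeries c (x0 - x0)).
  { symmetry. apply is_pseries_unique. apply Hser; [exact Hx0 |].
    rewrite Rminus_diag, Rabs_R0. exact Hr. }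
  apply (filterlim_ext_loc (fun x => PSeries c (x - x0))).
  { exists (mkposreal r Hr). intros x Hx HI. apply is_pseries_unique.
    apply Hser; [exact HI | exact Hx]. }
  rewrite Hh0. eapply filterlim_filter_le_1; [apply filter_le_within |].
  apply (continuous_comp (fun x => x - x0) (PSeries c)).
  - apply (continuous_minus (fun x => x) (fun _ => x0)); [apply continuous_id | apply continuous_const].
  - apply continuity_pt_filterlim. apply PSeries_continuity.
    rewrite Rminus_diag, Rabs_R0. exact Hrad.
Qed.

Definition clamp (a b x : R) : R := Rmax a (Rmin b x).

Lemma clamp_in (a b x : R) : a <= b -> a <= clamp a b x <= b.
Proof. intros. unfold clamp, Rmax, Rmin. repeat destruct Rle_dec; lra. Qed.

Lemma clamp_id (a b x : R) : a <= x <= b -> clamp a b x = x.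
Proof. intros. unfold clamp, Rmax, Rmin. repeat destruct Rle_dec; lra. Qed.

Lemma clamp_lipschitz (a b x y : R) : a <= b -> Rabs (clamp a b y - clamp a b x) <= Rabs (y - x).
Proof.
  intros. unfold clamp, Rmax, Rmin. repeat destruct Rle_dec;
  unfold Rabs; repeat destruct Rcase_abs; lra.
Qed.

Lemma continuous_comp_clamp (h : R -> R) (a b x : R) : a <= b ->
  (forall x0, a <= x0 <= b ->
     filterlim h (within (fun y => a <= y <= b) (locally x0)) (locally (h x0))) ->
  continuous (fun y => h (clamp a b y)) x.
Proof.
  intros Hab Hcont. unfold continuous.
  apply (filterlim_comp _ _ _ (clamp a b) h _
           (within (fun y => a <= y <= b) (locally (clamp a b x)))).
  - intros P [eps HP]. exists eps. intros y Hy. apply HP; [| apply clamp_in; exact Hab].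
    eapply Rle_lt_trans; [apply clamp_lipschitz; exact Hab | exact Hy].
  - apply Hcont. apply clamp_in. exact Hab.
Qed.

Lemma exp_1_ge : 2.56 <= exp 1.
Proof.
  assert (Hsq : forall x, exp (2 * x) = exp x * exp x)
    by (intros x; rewrite <- exp_plus; f_equal; ring).
  (* exp 1 = exp (1/8) ^ 8 >= (9/8) ^ 8 *)
  pose proof (exp_ineq1_le (1 / 8)).
  assert (H4 : 81 / 64 <= exp (1 / 4))
    by (replace (1 / 4) with (2 * (1 / 8)) by field; rewrite Hsq; nra).
  assert (H2 : 6561 / 4096 <= exp (1 / 2))
    by (replace (1 / 2) with (2 * (1 / 4)) by field; rewrite Hsq; nra).
  replace 1 with (2 * (1 / 2)) by field. rewrite Hsq. nra.
Qed.

Lemma sqrt_PI_ge : 1.73 <= sqrt PI.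
Proof.
  pose proof PI2_3_2.
  rewrite <- (sqrt_square 1.73) by lra. apply sqrt_le_1; nra.
Qed.

Lemma decay_integral_const_le (gam beta : R) : 0 < gam -> 0 < beta ->
  sqrt PI / 2 * gam * beta * sqrt (1 + beta) * (3 + beta) = 1 ->
  sqrt (1 + beta) * (1 + 3 / 4 * exp (-1)) <= / (2 * gam * beta).
Proof.
  intros Hgam Hbeta Heq.
  assert (Hk : 0 < sqrt (1 + beta)) by (apply sqrt_lt_R0; lra).
  assert (Hinv : / (2 * gam * beta) = sqrt (1 + beta) * (sqrt PI / 4 * (3 + beta))).
  { apply (Rmult_eq_reg_l (2 * gam * beta)); [| nra].
    rewrite Rinv_r by nra. rewrite <- Heq at 1. field. }
  rewrite Hinv. apply Rmult_le_compat_l; [lra |].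
  (* 1 + 3 / (4 e) < 1.293 < 1.297 < 3 sqrt PI / 4: there is little room to spare. *)
  pose proof sqrt_PI_ge. pose proof exp_1_ge.
  assert (Hexp : exp (-1) <= / 2.56).
  { replace (-1) with (- (1)) by ring. rewrite exp_Ropp.
    apply Rinv_le_contravar; lra. }
  nra.
Qed.

Lemma Fb_ext_on (h1 h2 : R -> R) (b x : R) : 0 <= x ->
  (forall y, 0 <= y <= x -> h1 y = h2 y) -> Fb h1 b x = Fb h2 b x.
Proof.
  intros Hx Heq. unfold Fb. rewrite (Heq x) by lra. do 3 f_equal.
  apply RInt_ext. intros y Hy.
  rewrite Rmin_left, Rmax_right in Hy by lra. rewrite Heq by lra. reflexivity.
Qed.

Theorem lemma3p8 (lam gam beta1 : R) (h : R -> R) (eta b1 b2 : R)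
  (Hlam : 0 < lam) (Hgam : 0 < gam)
  (Hbeta1 : 0 < beta1)
  (Hbeta1_eq : sqrt PI / 2 * gam * beta1 * sqrt (1 + beta1) * (3 + beta1) = 1)
  (Hbeta1_uniq : forall x, 0 < x ->
      sqrt PI / 2 * gam * x * sqrt (1 + x) * (3 + x) = 1 -> x = beta1)
  (Hana : analytic_on h 0 lam)
  (Hbnd : exists M, forall x, 0 <= x <= lam -> Rabs (h x) <= M)
  (Hh : forall x, 0 <= x <= lam -> 0 <= h x <= 1)
  (Heta : 0 <= eta <= lam)
  (Hb1 : 0 <= b1 < beta1) (Hb2 : 0 <= b2 < beta1) :
  RInt (fun x => Rabs (Fb h b1 x - Fb h b2 x)) 0 eta
    <= / (2 * gam * beta1) * Rabs (b1 - b2).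
Proof.
  set (hc := fun y => h (clamp 0 lam y)).
  assert (Hcont : forall x, continuous hc x).
  { intros x. apply continuous_comp_clamp; [lra |].
    intros x0 Hx0. apply analytic_on_continuous_within; assumption. }
  assert (Hrange : forall x, 0 <= hc x <= 1) by (intros x; apply Hh, clamp_in; lra).
  rewrite (RInt_ext _ (fun x => Rabs (Fb hc b1 x - Fb hc b2 x))).
  2: { intros x Hx. rewrite Rmin_left, Rmax_right in Hx by lra.
       rewrite !(Fb_ext_on h hc) by (lra || (intros y Hy; unfold hc; rewrite clamp_id; lra)).
       reflexivity. }
  eapply Rle_trans; [apply (RInt_Rabs_Fb_sub_le hc Hcont Hrange b1 b2 beta1); lra |].
  rewrite Rmult_comm. apply Rmult_le_compat_r; [apply Rabs_pos |].
  apply decay_integral_const_le; assumption.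
Qed.
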